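(* Let $u\in V$ and let $N\subseteq V\setminus\{u\}$ be a nonempty set of vertices, and let $0<\alpha<1$. Suppose that $p_{uv}>0$ and $q^*_{uv}/p_{uv}<\alpha$ for every $v\in N$, and that $Q:=\sum_{v\in N} q^*_{uv}>0$. Put $$\delta=\frac{1-\exp\left(-Q/\alpha\right)}{Q}.$$ Then there is a probability distribution over orderings $\pi$ of $N$ such that, if $\pi$ is drawn from it independently of $G$ and the pairs $\{u,v\}$, $v\in N$, are inspected in the order $\pi$, then for every $v\in N$ the probability that $\{u,v\}$ is the first inspected pair that is an edge of $G$ is at least $\delta\, q^*_{uv}$.
   Context: Let $V$ be a finite vertex set with, for every unordered pair $\{u,v\}$ of distinct vertices, a probability $p_{uv}\in[0,1]$; let $\mathcal D$ be the distribution of the random graph $G$ on $V$ in which each pair $\{u,v\}$ is an edge independently with probability $p_{uv}$. Fix a rule $M$ assigning to every graph $H$ on $V$ a maximum matching $M(H)$ of $H$. Define $q^*_{uv}=\Pr_{H\sim\mathcal D}(\{u,v\}\in M(H))$. *)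

From HB Require Import structures.
From Stdlib Require Import Reals.
From mathcomp Require Import all_boot.
Set Implicit Arguments. Unset Strict Implicit. Unset Printing Implicit Defensive.

Lemma Rplus_assoc' : associative Rplus.
Proof. by move=> x y z; rewrite Rplus_assoc. Qed.
Lemma Rmult_assoc' : associative Rmult.
Proof. by move=> x y z; rewrite Rmult_assoc. Qed.
HB.instance Definition _ := Monoid.isComLaw.Build R R0 Rplus
  Rplus_assoc' Rplus_comm Rplus_0_l.
HB.instance Definition _ := Monoid.isComLaw.Build R R1 Rmult
  Rmult_assoc' Rmult_comm Rmult_1_l.

Section Defs.
Variable V : finType.

(* Unordered pairs {u,v}, u <> v, are the 2-element subsets of V. *)
Definition pairsV : {set {set V}} := [set e : {set V} | #|e| == 2%N].

(* A graph on V is a set of unordered pairs H \subset pairsV. *)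
Definition is_matching (H Mt : {set {set V}}) : bool :=
  (Mt \subset H) &&
  [forall e in Mt, forall f in Mt, (e != f) ==> [disjoint e & f]].

Definition is_max_matching (H Mt : {set {set V}}) : bool :=
  is_matching H Mt &&
  [forall Mt' : {set {set V}}, is_matching H Mt' ==> (#|Mt'| <= #|Mt|)%N].

(* p e = probability that the pair e is an edge (only used on pairs).
   Probability of the graph H under D. *)
Definition graphP (p : {set V} -> R) (H : {set {set V}}) : R :=
  \big[Rmult/R1]_(e in pairsV) (if e \in H then p e else (Rminus R1 (p e))).

Definition PrG (p : {set V} -> R) (P : {set {set V}} -> bool) : R :=
  \big[Rplus/R0]_(H in powerset pairsV) (Rmult (graphP p H) (if P H then R1 else R0)).

Definition qstar (p : {set V} -> R) (M : {set {set V}} -> {set {set V}})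
  (u v : V) : R := PrG p (fun H => [set u; v] \in M H).

Definition is_ordering (N : {set V}) (s : seq V) : Prop :=
  uniq s /\ (forall x, (x \in s) = (x \in N)).

Definition first_edge (u : V) (s : seq V) (v : V) (H : {set {set V}}) : bool :=
  [&& v \in s, [set u; v] \in H &
      all (fun w => [set u; w] \notin H) (take (index v s) s)].

End Defs.

From HB Require Import structures.
From Stdlib Require Import Reals Lra.
From mathcomp Require Import all_boot.
Open Scope R_scope.

(* Give every w in N an independent exponential clock of rate
   a w = c / alpha * q*_{uw}, where c > 1 is a slack allowed by the strict
   hypothesis q*_{uw} < alpha * p_{uw}; the clock stands for "the pair {u,w}
   is inspected and is an edge".  The clock of v rings first before time 1
   with probability a v / A * (1 - e^{-A}), A = c * Q / alpha, which exceeds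
   delta * q*_{uv}.  To obtain a finite distribution over orderings, time is
   discretised into K steps: each w in N receives a random stamp in
   {0, ..., K} whose law, combined with the independent edge {u,w} of
   probability p_{uw}, reproduces the survival function of its clock (this
   needs a w <= p_{uw}); N is inspected in increasing order of stamps. *)

(* Distributivity of products over sums on R, needed to expand a product of
   sums into a sum over choice functions (bigA_distr_bigA, big_distrr). *)
HB.instance Definition _ := Monoid.isMulLaw.Build R R0 Rmult Rmult_0_l Rmult_0_r.
HB.instance Definition _ :=
  Monoid.isAddLaw.Build R Rmult Rplus Rmult_plus_distr_r Rmult_plus_distr_l.

Lemma Rsum_le (I : Type) (r : seq I) (P : pred I) (F G : I -> R) :
  (forall i, P i -> F i <= G i) ->
  \big[Rplus/0]_(i <- r | P i) F i <= \big[Rplus/0]_(i <- r | P i) G i.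
Proof. by move=> FG; apply: (big_ind2 (fun x y => x <= y)) => //; [lra | move=> *; lra]. Qed.

Lemma Rsum_ge0 (I : Type) (r : seq I) (P : pred I) (F : I -> R) :
  (forall i, P i -> 0 <= F i) -> 0 <= \big[Rplus/0]_(i <- r | P i) F i.
Proof. by move=> F0; apply: (big_ind (fun x => 0 <= x)) => //; [lra | move=> *; lra]. Qed.

Lemma Rprod_ge0 (I : Type) (r : seq I) (P : pred I) (F : I -> R) :
  (forall i, P i -> 0 <= F i) -> 0 <= \big[Rmult/1]_(i <- r | P i) F i.
Proof. by move=> F0; apply: (big_ind (fun x => 0 <= x)) => //; [lra | move=> *; nra]. Qed.

Lemma Rprod_indicator (I : finType) (P : pred I) (b : I -> bool) :
  \big[Rmult/1]_(i | P i) (if b i then 1 else 0) =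
  if [forall (i | P i), b i] then 1 else 0.
Proof.
case: ifP => [/forallP allb | /negbT].
  by apply: big1 => i Pi; move: (allb i); rewrite Pi /= => ->.
rewrite negb_forall => /existsP [i]; rewrite negb_imply => /andP [Pi nbi].
by rewrite (bigD1 i) //= (negbTE nbi) Rmult_0_l.
Qed.

Lemma telescope (n : nat) (f : nat -> R) :
  \big[Rplus/0]_(j < n) (f j - f j.+1) = f 0%N - f n.
Proof.
elim: n => [|n IH]; first by rewrite big_ord0 /=; lra.
by rewrite big_ord_recr /= IH; lra.
Qed.

Lemma telescope_upto (n k : nat) (f : nat -> R) : (k < n)%N ->
  \big[Rplus/0]_(j < n) (if (j <= k)%N then f j - f j.+1 else 0) = f 0%N - f k.+1.
Proof.
move=> kn; rewrite -(subnKC kn) big_split_ord /=.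
rewrite (eq_bigr (fun j : 'I_k.+1 => f j - f j.+1)) => [|j _]; last by rewrite -ltnS ltn_ord.
rewrite telescope big1 => [|j _]; last by rewrite leqNgt ltnS leq_addr.
lra.
Qed.

Lemma sum_single (n m : nat) (X : R) :
  \big[Rplus/0]_(k < n) (if m == k then X else 0) = if (m < n)%N then X else 0.
Proof.
case: ltnP => [mn | nm].
  rewrite (bigD1 (Ordinal mn)) //= eqxx big1 /= => [|i /negbTE ne]; first lra.
  by rewrite eq_sym -(inj_eq val_inj) /= in ne; rewrite ne.
apply: big1 => i _; case: eqP => // mi; move: (ltn_ord i); rewrite -mi ltnNge nm //.
Qed.

Set Implicit Arguments. Unset Strict Implicit. Unset Printing Implicit Defensive.

Section GraphProbability.
Variables (V : finType) (p : {set V} -> R).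

(* Independence of the edges: an event prescribing, for each pair e separately,
   which of the two states of e is allowed has probability equal to the product
   over the pairs of the probability of the allowed states. *)
Lemma PrG_edgewise (c : {set V} -> bool -> bool) :
  PrG p (fun H => [forall e in pairsV V, c e (e \in H)]) =
  \big[Rmult/1]_(e in pairsV V)
     (p e * (if c e true then 1 else 0) + (1 - p e) * (if c e false then 1 else 0)).
Proof.
pose F e (b : bool) := if e \in pairsV V
  then (if b then p e else 1 - p e) * (if c e b then 1 else 0)
  else (if b then 0 else 1).
transitivity (\big[Rmult/1]_(e : {set V}) \big[Rplus/0]_(b : bool) F e b); last first.
  rewrite [RHS]big_mkcond; apply: eq_bigr => e _; rewrite big_bool /F.
  by case: (e \in pairsV V) => /=; lra.
rewrite bigA_distr_bigA.
rewrite (reindex (fun H : {set {set V}} => [ffun e => e \in H])); last first.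
  exists (fun f : {ffun {set V} -> bool} => [set e | f e]) => H _.
    by apply/setP => e; rewrite inE ffunE.
  by apply/ffunP => e; rewrite ffunE inE.
rewrite /PrG big_mkcond; apply: eq_bigr => H _.
under eq_bigr do rewrite ffunE.
rewrite powersetE; case: ifP => [sub | /negbT /subsetPn [e eH enp]].
  rewrite /graphP -Rprod_indicator -big_split /= big_mkcond; apply: eq_bigr => e _.
  rewrite /F; case: ifP => // epV.
  by have -> : (e \in H) = false by apply: contraFF epV => /(subsetP sub).
by rewrite (bigD1 e) //= /F (negbTE enp) eH Rmult_0_l.
Qed.

Hypothesis p_prob : forall e, e \in pairsV V -> 0 <= p e <= 1.

Lemma graphP_ge0 H : 0 <= graphP p H.
Proof. by apply: Rprod_ge0 => e /p_prob; case: (e \in H); lra. Qed.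

Lemma PrG_ge0 P : 0 <= PrG p P.
Proof. by apply: Rsum_ge0 => H _; have := graphP_ge0 H; case: (P H); lra. Qed.

Lemma PrG_mono (P P' : pred {set {set V}}) :
  (forall H : {set {set V}}, H \subset pairsV V -> P' H -> P H) ->
  PrG p P' <= PrG p P.
Proof.
move=> imp; apply: Rsum_le => H; rewrite powersetE => sub.
have := graphP_ge0 H; have := imp H sub.
case: (P' H); last by case: (P H); lra.
by case: (P H) => [| /(_ isT)] //; lra.
Qed.

Lemma pair_in (u w : V) : u != w -> [set u; w] \in pairsV V.
Proof. by move=> uw; rewrite inE cards2 uw. Qed.

(* If every vertex inspected before v in the order s lies in W, then {u,v} is
   the first edge found as soon as {u,v} is an edge and no {u,w}, w in W, is;
   by independence this has probability p{u,v} * prod_(w in W) (1 - p{u,w}). *)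
Lemma first_edge_lb (u v : V) (N W : {set V}) (s : seq V) :
  u \notin N -> v \in N -> W \subset N -> v \notin W -> v \in s ->
  {subset take (index v s) s <= W} ->
  p [set u; v] * \big[Rmult/1]_(w in W) (1 - p [set u; w]) <=
  PrG p (first_edge u s v).
Proof.
move=> uN vN WN vW vs before.
have u_neq w : w \in N -> u != w by move=> wN; apply: contraNneq uN => ->.
have uW_pair w : w \in W -> [set u; w] \in pairsV V.
  by move=> wW; apply/pair_in/u_neq/(subsetP WN).
pose T := [set [set u; w] | w in W].
pose c e (b : bool) := if e == [set u; v] then b else if e \in T then ~~ b else true.
have inj : {in W &, injective (fun w => [set u; w])}.
  move=> w1 w2 w1W _ /setP /(_ w1); rewrite !inE eqxx orbT.
  by rewrite eq_sym (negbTE (u_neq _ (subsetP WN _ w1W))) /= => /esym /eqP.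
have uvT : [set u; v] \notin T.
  apply/imsetP => [[w wW /setP /(_ v)]].
  rewrite !inE eqxx orbT eq_sym (negbTE (u_neq v vN)) /= => /esym /eqP vw.
  by move: vW; rewrite vw wW.
have neq_uv e : e \in T -> (e == [set u; v]) = false.
  by move=> eT; apply: contraNF uvT => /eqP <-.
apply: (@Rle_trans _ (PrG p (fun H => [forall e in pairsV V, c e (e \in H)]))).
  rewrite PrG_edgewise (bigD1 [set u; v]) /=; last exact/pair_in/u_neq.
  rewrite {1}/c eqxx (bigID (fun e => e \in T)) /=.
  rewrite [X in _ * (_ * X)]big1 => [|e /andP [/andP [_ ne] nT]]; last first.
    by rewrite /c (negbTE ne) (negbTE nT) /=; lra.
  rewrite (eq_bigl (fun e => e \in T)) => [|e]; last first.
    case eT: (e \in T); last by rewrite andbF.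
    by move: (eT) => /imsetP [w wW ew]; rewrite ew uW_pair // -ew neq_uv.
  rewrite (eq_bigr (fun e => 1 - p e)) => [|e eT]; last by rewrite /c neq_uv // eT /=; lra.
  by rewrite big_imset //= /c eqxx /=; apply: Req_le; ring.
apply: PrG_mono => H _ /forallP /= allc.
have := allc [set u; v]; rewrite pair_in ?u_neq // /c eqxx /= => uvH.
rewrite /first_edge vs uvH /=; apply/allP => w /before wW.
have wT : [set u; w] \in T by apply: imset_f.
by have := allc [set u; w]; rewrite uW_pair // /c neq_uv // wT.
Qed.

End GraphProbability.

(* Given a survival sequence S over K steps (S 0 = 1,
   S nonincreasing) and an edge probability p > 0 with 1 - S K <= p, the law
   [stamp_law K S p] on {0, ..., K} is chosen so that, combined with an
   independent edge of probability p, "stamp = k and edge" has probability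
   S k - S k.+1, and "stamp <= k implies no edge" has probability S k.+1:
   the first edge arrival of a stamped vertex has survival function S. *)
Section StampLaw.
Variables (K : nat) (S : nat -> R) (p : R).
Hypotheses (S0 : S 0%N = 1) (p_pos : 0 < p).

Definition stamp_law (j : nat) : R :=
  if (j < K)%N then (S j - S j.+1) / p
  else if j == K then 1 - (1 - S K) / p else 0.

Lemma stamp_law_ge0 j :
  (forall i, S i.+1 <= S i) -> 1 - S K <= p -> 0 <= stamp_law j.
Proof.
move=> S_dec S_K; rewrite /stamp_law.
case: ifP => _.
  by apply: Rmult_le_pos; [have := S_dec j; lra | apply/Rlt_le/Rinv_0_lt_compat].
case: eqP => _; last lra.
have : (1 - S K) / p <= 1 by apply: (Rmult_le_reg_r p) => //; field_simplify; lra.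
lra.
Qed.

Lemma stamp_law_sum : \big[Rplus/0]_(j < K.+1) stamp_law j = 1.
Proof.
rewrite big_ord_recr /= /stamp_law ltnn eqxx.
rewrite (eq_bigr (fun j : 'I_K => S j / p - S j.+1 / p)) => [|j _]; last first.
  by rewrite ltn_ord; field; lra.
by rewrite (telescope K (fun j => S j / p)) /= S0; field; lra.
Qed.

Lemma stamp_law_edge_at k : (k < K)%N ->
  \big[Rplus/0]_(j < K.+1) (stamp_law j * (if (j : nat) == k then p else 0)) =
  S k - S k.+1.
Proof.
move=> kK.
rewrite (eq_bigr (fun j : 'I_K.+1 => if k == j then stamp_law k * p else 0));
  last by move=> j _; rewrite eq_sym; case: eqP => [-> | _] //; rewrite Rmult_0_r.
by rewrite sum_single ltnS (ltnW kK) /stamp_law kK; field; lra.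
Qed.

Lemma stamp_law_no_edge_upto k : (k < K)%N ->
  \big[Rplus/0]_(j < K.+1) (stamp_law j * (if (j <= k)%N then 1 - p else 1)) =
  S k.+1.
Proof.
move=> kK.
rewrite big_ord_recr /= /stamp_law ltnn eqxx leqNgt kK /=.
rewrite (eq_bigr (fun j : 'I_K => (S j / p - S j.+1 / p) -
   (if (j <= k)%N then S j - S j.+1 else 0))) => [|j _]; last first.
  by rewrite ltn_ord; case: ifP => _; field; lra.
rewrite big_split /= (telescope K (fun j => S j / p)) /=.
rewrite -(big_morph Ropp (id1 := 0) (op1 := Rplus) (id2 := 0) (op2 := Rplus));
  [| by move=> x y; lra | lra].
by rewrite telescope_upto // S0; field; lra.
Qed.

End StampLaw.

Definition dirac0 (j : nat) : R := if j == 0%N then 1 else 0.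

Lemma dirac0_mean (K : nat) (F : nat -> R) :
  \big[Rplus/0]_(j < K.+1) (dirac0 j * F j) = F 0%N.
Proof. by rewrite big_ord_recl big1 /dirac0 /= => [|j _]; lra. Qed.

(* The ordering of N induced by a stamp function r : ties are broken by the
   (fixed) enumeration order of N, so a vertex inspected before v has a
   stamp no larger than that of v. *)
Section StampOrdering.
Variables (V : finType) (N : {set V}) (K : nat).

Definition order_by (r : {ffun V -> 'I_K.+1}) : seq V :=
  sort (fun a b : V => (r a <= r b)%N) (enum N).

Lemma order_by_ordering r : is_ordering N (order_by r).
Proof. by split => [|x]; rewrite ?sort_uniq ?enum_uniq // mem_sort mem_enum. Qed.

Lemma order_by_before r v : v \in N ->
  {subset take (index v (order_by r)) (order_by r) <=
          [set w in N | (w != v) && (r w <= r v)%N]}.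
Proof.
move=> vN w wt; set s := order_by r in wt *.
have vs : v \in s by rewrite mem_sort mem_enum.
have ws : w \in s by apply: mem_take wt.
set i := index v s in wt.
have iS : (i < size s)%N by rewrite index_mem.
set j := index w (take i s).
have ji : (j < i)%N.
  have : (j < size (take i s))%N by rewrite index_mem.
  by rewrite size_take iS.
have wj : nth w s j = w by rewrite -(nth_take _ ji) nth_index.
have vi : nth w s i = v by rewrite nth_index.
have sorted_s : sorted (fun a b : V => (r a <= r b)%N) s.
  by apply: sort_sorted => a b; exact: leq_total.
rewrite !inE -(mem_enum (mem N)) -(mem_sort (fun a b : V => (r a <= r b)%N)) -/s ws /=.
apply/andP; split.
  by apply/eqP => wv; have := before_find w ji; rewrite /= wj wv eqxx.
have := sorted_leq_nth (fun a b c => @leq_trans _ _ _) (fun a => leqnn _) w sorted_s.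
by move=> /(_ j i); rewrite !inE (ltn_trans ji iS) iS wj vi => /(_ isT isT (ltnW ji)).
Qed.

End StampOrdering.

Lemma In_map_seq (A B : Type) (f : A -> B) (s : seq A) (y : B) :
  List.In y (map f s) -> exists x, y = f x.
Proof. by elim: s => //= a s IH [<- | /IH]; [exists a |]. Qed.

Section StampMixture.
Variables (V : finType) (p : {set V} -> R) (u : V) (N : {set V}) (K : nat)
  (E : V -> nat -> R).
Hypotheses (p_prob : forall e, e \in pairsV V -> 0 <= p e <= 1) (uN : u \notin N).
Hypotheses (p_pos : forall w, w \in N -> 0 < p [set u; w])
  (E0 : forall w, E w 0%N = 1) (E_dec : forall w j, E w j.+1 <= E w j)
  (E_K : forall w, w \in N -> 1 - E w K <= p [set u; w]).

Definition stamp (w : V) : nat -> R :=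
  if w \in N then stamp_law K (E w) (p [set u; w]) else dirac0.

Definition stamp_weight (r : {ffun V -> 'I_K.+1}) : R := \big[Rmult/1]_w stamp w (r w).

Definition stamp_mixture : seq (R * seq V) :=
  [seq (stamp_weight r, order_by N r) | r <- enum {ffun V -> 'I_K.+1}].

Lemma stamp_weight_ge0 r : 0 <= stamp_weight r.
Proof.
apply: Rprod_ge0 => w _; rewrite /stamp; case: ifP => wN.
  by apply: stamp_law_ge0; [apply: p_pos | apply: E_dec | apply: E_K].
by rewrite /dirac0; case: eqP; lra.
Qed.

Lemma stamp_mixture_support d :
  List.In d stamp_mixture -> 0 <= d.1 /\ is_ordering N d.2.
Proof.
by move=> /(@In_map_seq _ _ _ _ d) [r ->]; split; [apply: stamp_weight_ge0 | apply: order_by_ordering].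
Qed.

Lemma stamp_mixture_sum : \big[Rplus/0]_(d <- stamp_mixture) d.1 = 1.
Proof.
rewrite big_map big_enum /= /stamp_weight -(bigA_distr_bigA (fun w (j : 'I_K.+1) => stamp w j)).
apply: big1 => w _; rewrite /stamp; case: ifP => wN.
  by apply: stamp_law_sum; [apply: E0 | apply: p_pos].
by rewrite -[RHS](dirac0_mean K (fun=> 1)); apply: eq_bigr => j _; rewrite Rmult_1_r.
Qed.

Variable v : V.
Hypothesis vN : v \in N.

(* Given the stamp j of w, the probability of the part of the event
   "v has stamp k, {u,v} is an edge, and no w stamped at most k has an edge"
   that concerns the pair {u,w}. *)
Definition inspect_weight (k : nat) (w : V) (j : nat) : R :=
  if w == v then (if j == k then p [set u; v] else 0)
  else if (w \in N) && (j <= k)%N then 1 - p [set u; w] else 1.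

Lemma inspect_factorization k : (k < K)%N ->
  \big[Rmult/1]_w \big[Rplus/0]_(j < K.+1) (stamp w j * inspect_weight k w j) =
  (E v k - E v k.+1) *
  \big[Rmult/1]_(w | w != v) (if w \in N then E w k.+1 else 1).
Proof.
move=> kK; rewrite (bigD1 v) //=; congr Rmult.
  by rewrite /stamp /inspect_weight vN eqxx stamp_law_edge_at //; apply: p_pos.
apply: eq_bigr => w wv; rewrite /stamp /inspect_weight (negbTE wv).
case: ifP => wN /=; first by rewrite stamp_law_no_edge_upto //; apply: p_pos.
exact: (dirac0_mean K (fun=> 1)).
Qed.

(* For a fixed stamp function r, the event of the factorization can only occur
   for k = r v, and it implies that {u,v} is found first in the order of r. *)
Lemma inspect_term_bound (r : {ffun V -> 'I_K.+1}) :
  \big[Rplus/0]_(k < K) \big[Rmult/1]_w (stamp w (r w) * inspect_weight k w (r w)) <=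
  stamp_weight r * PrG p (first_edge u (order_by N r) v).
Proof.
pose W := [set w in N | (w != v) && (r w <= r v)%N].
pose pW := p [set u; v] * \big[Rmult/1]_(w in W) (1 - p [set u; w]).
have pW_ge0 : 0 <= pW.
  apply: Rmult_le_pos; first by have := p_pos vN; lra.
  apply: Rprod_ge0 => w; rewrite inE => /andP [wN _].
  have /p_prob : [set u; w] \in pairsV V by apply/pair_in; apply: contraNneq uN => ->.
  lra.
have term k : \big[Rmult/1]_w (stamp w (r w) * inspect_weight k w (r w)) =
    if (r v : nat) == k then stamp_weight r * pW else 0.
  rewrite big_split /= [X in _ * X](bigD1 v) //= /inspect_weight eqxx.
  case: eqP => [rvk | _]; last by rewrite /stamp_weight; ring.
  rewrite /stamp_weight /pW; congr (_ * (_ * _)).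
  rewrite big_mkcond [RHS]big_mkcond; apply: eq_bigr => w _; rewrite inE -rvk.
  by case: (w == v); case: (w \in N).
rewrite (eq_bigr (fun k : 'I_K => if (r v : nat) == k then stamp_weight r * pW else 0));
  last by move=> k _; apply: term.
rewrite sum_single.
apply: (@Rle_trans _ (stamp_weight r * pW)).
  by case: ifP => _; [lra | apply: Rmult_le_pos => //; apply: stamp_weight_ge0].
apply: Rmult_le_compat_l; first exact: stamp_weight_ge0.
rewrite /pW; apply: (first_edge_lb p_prob uN vN _ _ _ (@order_by_before _ _ _ r _ vN)).
- by apply/subsetP => w; rewrite inE => /andP [].
- by rewrite inE eqxx andbF.
- by rewrite mem_sort mem_enum.
Qed.

(* The probability that {u,v} is the first edge found, under the mixture, is
   at least the probability that the first edge arrival is at v. *)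
Lemma stamp_mixture_bound :
  \big[Rplus/0]_(k < K) ((E v k - E v k.+1) *
      \big[Rmult/1]_(w | w != v) (if w \in N then E w k.+1 else 1))
  <= \big[Rplus/0]_(d <- stamp_mixture) (d.1 * PrG p (first_edge u d.2 v)).
Proof.
rewrite -(eq_bigr _ (fun k _ => inspect_factorization (ltn_ord k))).
under eq_bigr do rewrite (bigA_distr_bigA (fun w (j : 'I_K.+1) => stamp w j * inspect_weight _ w j)).
rewrite exchange_big /= big_map big_enum /=.
by apply: Rsum_le => r _; apply: inspect_term_bound.
Qed.

End StampMixture.

(* Exponential clocks observed at K regular steps.  [survival a K j] is the
   probability that a clock of rate a (run over [0, 1]) has not rung after
   j of the K steps. *)
Definition survival (a : R) (K j : nat) : R := exp (- (INR j * (a / INR K))).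

Lemma Rdiv_nonneg (x y : R) : 0 <= x -> 0 < y -> 0 <= x / y.
Proof. by move=> x0 y0; apply/Rmult_le_pos/Rlt_le/Rinv_0_lt_compat. Qed.

Lemma one_sub_exp_le (y : R) : 1 - exp (- y) <= y.
Proof. by have := exp_ineq1_le (- y); lra. Qed.

Lemma exp_le_mono (x y : R) : x <= y -> exp x <= exp y.
Proof. by case/Rle_lt_or_eq_dec => [/exp_increasing | ->]; lra. Qed.

Lemma survival0 a K : survival a K 0 = 1.
Proof. by rewrite /survival /= Rmult_0_l Ropp_0 exp_0. Qed.

Lemma survival_dec a K j : 0 <= a -> survival a K j.+1 <= survival a K j.
Proof.
move=> a0; apply: exp_le_mono; rewrite S_INR.
have aK : 0 <= a / INR K.
  case: (Rle_lt_or_eq_dec _ _ (pos_INR K)) => [K0 | <-]; first exact: Rdiv_nonneg.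
  by rewrite /Rdiv Rinv_0 Rmult_0_r; lra.
by have := pos_INR j; nra.
Qed.

Lemma survival_rate0 K j : survival 0 K j = 1.
Proof. by rewrite /survival /Rdiv Rmult_0_l Rmult_0_r Ropp_0 exp_0. Qed.

Lemma survival_end a K : (0 < K)%N -> survival a K K = exp (- a).
Proof.
by move=> K0; have := lt_0_INR K (ltP K0) => KR; rewrite /survival; congr exp; field; lra.
Qed.

(* A Riemann-sum lower bound: with step y, the sum of e^{-(k+1) y} over K
   steps, times y, almost reaches the integral 1 - e^{-K y}. *)
Lemma riemann_exp_lb (K : nat) (y : R) : 0 <= y ->
  1 - exp (- (INR K * y)) - y <= y * \big[Rplus/0]_(k < K) exp (- (INR k.+1 * y)).
Proof.
move=> y0.
have step k : exp (- (INR k.+1 * y)) - exp (- (INR k.+2 * y)) <=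
              y * exp (- (INR k.+1 * y)).
  have -> : exp (- (INR k.+2 * y)) = exp (- (INR k.+1 * y)) * exp (- y).
    by rewrite -exp_plus; congr exp; rewrite (S_INR k.+1); ring.
  by have := one_sub_exp_le y; have := exp_pos (- (INR k.+1 * y)); nra.
have sum_lb : \big[Rplus/0]_(k < K) (exp (- (INR k.+1 * y)) - exp (- (INR k.+2 * y)))
    <= y * \big[Rplus/0]_(k < K) exp (- (INR k.+1 * y)).
  by rewrite big_distrr; apply: Rsum_le => k _; apply: step.
rewrite (telescope K (fun j => exp (- (INR j.+1 * y)))) in sum_lb.
change (INR 1) with 1 in sum_lb; rewrite Rmult_1_l in sum_lb.
have split_exp : exp (- (INR K.+1 * y)) = exp (- y) * exp (- (INR K * y)).
  by rewrite -exp_plus; congr exp; rewrite S_INR; ring.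
rewrite split_exp in sum_lb.
have : 1 - y <= exp (- y) by have := exp_ineq1_le (- y); lra.
have : exp (- (INR K * y)) <= 1.
  by rewrite -exp_0; apply: exp_le_mono; have := pos_INR K; nra.
have := exp_pos (- (INR K * y)).
nra.
Qed.

(* One step of the schedule: the chance that the clock of rate b (per step)
   rings in step k.+1 while the others (total rate y - b) stay silent. *)
Lemma step_first_lb (k : nat) (b y : R) : 0 <= b ->
  b * exp (- (INR k.+1 * y)) <=
  (exp (- (INR k * b)) - exp (- (INR k.+1 * b))) * exp (- (INR k.+1 * (y - b))).
Proof.
move=> b0.
have -> : (exp (- (INR k * b)) - exp (- (INR k.+1 * b))) * exp (- (INR k.+1 * (y - b)))
        = (exp b - 1) * exp (- (INR k.+1 * y)).
  rewrite Rmult_minus_distr_r -!exp_plus Rmult_minus_distr_r Rmult_1_l -exp_plus.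
  by congr (exp _ - exp _); rewrite S_INR; ring.
by have := exp_ineq1_le b; have := exp_pos (- (INR k.+1 * y)); nra.
Qed.

Lemma first_clock_lb (I : finType) (a : I -> R) (K : nat) (v : I) (x : R) :
  (forall w, 0 <= a w) -> (0 < K)%N ->
  let A := \big[Rplus/0]_w a w in 0 < A ->
  A / INR K <= exp (- x) - exp (- A) ->
  a v / A * (1 - exp (- x)) <=
  \big[Rplus/0]_(k < K) ((survival (a v) K k - survival (a v) K k.+1) *
     \big[Rmult/1]_(w | w != v) survival (a w) K k.+1).
Proof.
move=> a0 K0 A A0 fine_step.
have KR : 0 < INR K by apply/lt_0_INR/ltP.
pose y := A / INR K; pose b := a v / INR K.
have others k : \big[Rmult/1]_(w | w != v) survival (a w) K k.+1 =
                exp (- (INR k.+1 * (y - b))).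
  rewrite (eq_bigr (fun w => exp (- (INR k.+1 / INR K) * a w))) => [|w _]; last first.
    by rewrite /survival; congr exp; field; lra.
  rewrite -(big_morph exp exp_plus exp_0) -big_distrr /=.
  have : A = a v + \big[Rplus/0]_(w | w != v) a w by rewrite /A (bigD1 v).
  by move=> splitA; congr exp; rewrite /y /b splitA; field; lra.
have terms : b * \big[Rplus/0]_(k < K) exp (- (INR k.+1 * y)) <=
    \big[Rplus/0]_(k < K) ((survival (a v) K k - survival (a v) K k.+1) *
       \big[Rmult/1]_(w | w != v) survival (a w) K k.+1).
  rewrite big_distrr; apply: Rsum_le => k _; rewrite others.
  by apply: step_first_lb; apply: Rdiv_nonneg.
apply: Rle_trans terms.
have riemann := riemann_exp_lb K (Rlt_le _ _ (Rdiv_lt_0_compat _ _ A0 KR)).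
have KA : INR K * (A / INR K) = A by field; lra.
rewrite KA in riemann.
have -> : b = a v / A * y by rewrite /b /y; field; lra.
rewrite Rmult_assoc; apply: Rmult_le_compat_l.
  by apply: Rdiv_nonneg.
rewrite /y; lra.
Qed.

Theorem rate_orderings (V : finType) (p : {set V} -> R) (u : V) (N : {set V})
    (a : V -> R) (x : R) :
  (forall e, e \in pairsV V -> 0 <= p e <= 1) -> u \notin N ->
  (forall w, w \in N -> 0 < p [set u; w]) ->
  (forall w, 0 <= a w) -> (forall w, w \notin N -> a w = 0) ->
  (forall w, w \in N -> a w <= p [set u; w]) ->
  0 <= x < \big[Rplus/0]_w a w ->
  exists D : seq (R * seq V),
    (forall d, List.In d D -> 0 <= d.1 /\ is_ordering N d.2) /\
    \big[Rplus/0]_(d <- D) d.1 = 1 /\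
    (forall v, v \in N ->
       a v / (\big[Rplus/0]_w a w) * (1 - exp (- x)) <=
       \big[Rplus/0]_(d <- D) (d.1 * PrG p (first_edge u d.2 v))).
Proof.
move=> p_prob uN p_pos a0 a_out a_le [x0 xA]; set A := \big[Rplus/0]_w a w in xA *.
have A0 : 0 < A by lra.
have gap : 0 < (exp (- x) - exp (- A)) / A.
  by apply: Rdiv_lt_0_compat => //; have := exp_increasing (- A) (- x); lra.
have [K [fine_step K0]] := archimed_cor1 _ gap.
have step_small : A / INR K <= exp (- x) - exp (- A).
  apply: Rlt_le; rewrite /Rdiv Rmult_comm.
  by apply: (Rmult_lt_reg_r (/ A)); [apply: Rinv_0_lt_compat | rewrite Rmult_assoc Rinv_r; lra].
pose E w := survival (a w) K.
have E_K w : w \in N -> 1 - E w K <= p [set u; w].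
  move=> wN; rewrite /E survival_end; last exact/ltP.
  exact: Rle_trans (one_sub_exp_le _) (a_le w wN).
have E0 w : E w 0%N = 1 by apply: survival0.
have E_dec w j : E w j.+1 <= E w j by apply: survival_dec.
exists (stamp_mixture p u N K E); split; [|split].
- exact: stamp_mixture_support p_pos E_dec E_K.
- exact: stamp_mixture_sum p_pos E0.
move=> v vN; apply: Rle_trans (stamp_mixture_bound p_prob uN p_pos E0 E_dec E_K vN).
apply: Rle_trans (first_clock_lb v a0 (introT ltP K0) A0 step_small) _; apply: Req_le.
apply: eq_bigr => k _; congr Rmult; apply: eq_bigr => w _.
by case: ifP => // /negbT /a_out; rewrite /E => ->; rewrite survival_rate0.
Qed.

Lemma uniform_slack (T : eqType) (s : seq T) (f g : T -> R) :
  (forall w, w \in s -> 0 <= f w < g w) ->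
  exists c, 1 < c /\ forall w, w \in s -> c * f w <= g w.
Proof.
elim: s => [|a s IH] fg; first by exists 2; split; [lra |].
have [c1 [c1_gt1 c1_ok]] : exists c, 1 < c /\ forall w, w \in s -> c * f w <= g w.
  by apply: IH => w ws; apply: fg; rewrite inE ws orbT.
have [fa0 fa_lt] : 0 <= f a < g a by apply: fg; rewrite inE eqxx.
pose t := (g a - f a) / (1 + f a).
have t0 : 0 < t by apply: Rdiv_lt_0_compat; lra.
have t_def : t * (1 + f a) = g a - f a by rewrite /t; field; lra.
exists (Rmin c1 (1 + t)); split; first by apply: Rmin_glb_lt; lra.
move=> w; rewrite inE => /orP [/eqP -> | ws].
  by apply: Rle_trans (Rmult_le_compat_r _ _ _ fa0 (Rmin_r _ _)) _; nra.
have [fw0 _] : 0 <= f w < g w by apply: fg; rewrite inE ws orbT.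
exact: Rle_trans (Rmult_le_compat_r _ _ _ fw0 (Rmin_l _ _)) (c1_ok w ws).
Qed.

Unset Implicit Arguments.

(* The corollary: the rates a w = c / alpha * q*_{uw}, with a slack c > 1
   allowed by q*_{uw} < alpha * p_{uw}, satisfy a w <= p_{uw} and have total
   c * Q / alpha > Q / alpha; the construction with x = Q / alpha gives the
   bound a v / (c Q / alpha) * (1 - e^{-Q/alpha}) = delta * q*_{uv}. *)
Theorem corollary1 (V : finType) (p : {set V} -> R)
  (M : {set {set V}} -> {set {set V}}) (u : V) (N : {set V}) (alpha : R) :
  (forall e, e \in pairsV V -> 0 <= p e <= 1) ->
  (forall H : {set {set V}}, H \subset pairsV V -> is_max_matching H (M H)) ->
  u \notin N -> N != set0 -> 0 < alpha < 1 ->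
  (forall v, v \in N ->
     0 < p [set u; v] /\ qstar p M u v / p [set u; v] < alpha) ->
  let Q := \big[Rplus/0]_(v in N) qstar p M u v in
  0 < Q ->
  let delta := (1 - exp (- (Q / alpha))) / Q in
  exists D : seq (R * seq V),
    (forall x, List.In x D -> 0 <= x.1 /\ is_ordering N x.2) /\
    \big[Rplus/0]_(x <- D) x.1 = 1 /\
    (forall v, v \in N ->
       delta * qstar p M u v <=
       \big[Rplus/0]_(x <- D) (x.1 * PrG p (first_edge u x.2 v))).
Proof.
move=> p_prob _ uN _ [alpha0 _] hyp Q Q0 delta.
pose q w := qstar p M u w.
have p_pos w : w \in N -> 0 < p [set u; w] by move=> /hyp [].
have q_lt w : w \in N -> 0 <= q w < alpha * p [set u; w].
  move=> /hyp [pw qp]; split; first exact: PrG_ge0.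
  have -> : q w = q w / p [set u; w] * p [set u; w] by field; lra.
  exact: Rmult_lt_compat_r.
have [c [c_gt1 c_ok]] :
    exists c, 1 < c /\ forall w, w \in enum N -> c * q w <= alpha * p [set u; w].
  by apply: uniform_slack => w; rewrite mem_enum; apply: q_lt.
pose a w := if w \in N then c / alpha * q w else 0.
have sum_a : \big[Rplus/0]_w a w = c * (Q / alpha).
  by rewrite -big_mkcond -big_distrr /= -/Q; field; lra.
have a0 w : 0 <= a w.
  rewrite /a; case: ifP => wN; last lra.
  by have [] := q_lt w wN; have := Rdiv_lt_0_compat c alpha; nra.
have a_out w : w \notin N -> a w = 0 by rewrite /a => /negbTE ->.
have a_le w : w \in N -> a w <= p [set u; w].
  move=> wN; rewrite /a wN; have := c_ok w; rewrite mem_enum => /(_ wN) cq.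
  apply: (Rmult_le_reg_l alpha) => //.
  by have -> : alpha * (c / alpha * q w) = c * q w by field; lra.
have x_range : 0 <= Q / alpha < \big[Rplus/0]_w a w.
  by rewrite sum_a; have := Rdiv_lt_0_compat Q alpha Q0 alpha0; nra.
have [D [D_supp [D_sum D_lb]]] :=
  rate_orderings p_prob uN p_pos a0 a_out a_le x_range.
exists D; split; [exact: D_supp | split; first exact: D_sum].
move=> v vN; apply: Rle_trans (D_lb v vN); apply: Req_le.
by rewrite sum_a /a vN /delta /q; field; lra.
Qed.
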